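(* Let $p$ be the POP of length 4 defined by the relations $1>3$, $1>2$ and $4>2$; equivalently, avoiding $p$ means simultaneously avoiding the patterns $4132, 4213, 3214, 4123, 3124$. Let $a(n)=|S_n(p)|$. Then $a(0)=a(1)=1$, $a(2)=2$, and for $n\geq 3$, $$a(n)=4a(n-1)-3a(n-2)+a(n-3);$$ consequently, for $n\geq 1$, $a(n)=\sum_{i=0}^{n-1}\binom{n+2i-1}{3i}$. Moreover, $$\sum_{n\geq 0}a(n)x^n=\frac{1-3x+x^2}{1-4x+3x^2-x^3}.$$
   Context: An $n$-permutation is a word $\pi=\pi_1\cdots\pi_n$ containing each of $1,\ldots,n$ exactly once; $S_n$ is the set of $n$-permutations ($S_0$ consists of the empty permutation). A partially ordered pattern (POP) $p$ of length $k$ is a partial order on the label set $\{1,\ldots,k\}$; it is described by a set of generating relations, where a relation $x>y$ means that in an occurrence the entry in the $x$-th chosen position must be larger than the entry in the $y$-th chosen position, and labels not involved in any relation are unconstrained. An $n$-permutation $\pi$ contains $p$ if there are indices $1\leq i_1<\cdots<i_k\leq n$ such that $\pi_{i_x}>\pi_{i_y}$ whenever $x>y$ in the partial order; otherwise $\pi$ avoids $p$. $S_n(p)$ denotes the set of $n$-permutations avoiding $p$. A permutation $\pi$ avoids a classical pattern $q$ if it has no subsequence order-isomorphic to $q$. *)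

From mathcomp Require Import all_boot all_order all_algebra all_fingroup.
Set Implicit Arguments. Unset Strict Implicit. Unset Printing Implicit Defensive.

(* An n-permutation is represented as s : 'S_n (a permutation of 'I_n = {0..n-1});
   the word pi_1 ... pi_n is (s 0) ... (s (n-1)) (values shifted by -1, which
   does not affect order comparisons).

   A POP of length k is given by its generating relations: a list [rels] of
   pairs (x, y) with 1 <= x, y <= k, the pair (x, y) meaning "x > y".
   s contains the POP if there are positions f 0 < ... < f (k-1) such that
   s (f (x-1)) > s (f (y-1)) for each relation (x, y). *)
Definition contains_pop (k : nat) (rels : seq (nat * nat)) (n : nat) (s : 'S_n) : bool :=
  [exists f : {ffun 'I_k -> 'I_n},
     [forall i : 'I_k, forall j : 'I_k, (i < j)%N ==> (f i < f j)%N] &&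
     [forall i : 'I_k, forall j : 'I_k,
        ((i.+1, j.+1) \in rels) ==> (s (f j) < s (f i))%N]].

Definition avoids_pop (k : nat) (rels : seq (nat * nat)) (n : nat) (s : 'S_n) : bool :=
  ~~ contains_pop k rels s.

Definition num_avoiders (k : nat) (rels : seq (nat * nat)) (n : nat) : nat :=
  #|[set s : 'S_n | avoids_pop k rels s]|.

Definition pop_p : seq (nat * nat) := [:: (1, 3); (1, 2); (4, 2)].

Definition a (n : nat) : nat := num_avoiders 4 pop_p n.

From mathcomp Require Import all_boot all_order all_algebra all_fingroup.
From mathcomp Require Import zify.

(* Its key property ([avoidsw_ins]) describes
   the insertion of a new maximum n between u and v: u ++ n :: v avoids p iff
   u ++ v does, every entry of u has at most one smaller entry to its right in u
   ([inv_le1]), and every entry of v dominates the entries of v lying at least two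
   places to its right ([far_dec]).

   Every avoider of length n+1 is uniquely [ins m s]: the maximum n inserted at
   position m of a word s of length n.  The positions where the next maximum can
   be inserted are m-1 (sometimes), m, m+1 and m+2 (sometimes), and three bits
   ([label_of m s]) determine which of them occur and the bits of the resulting
   children.  This is a generating tree with succession rule [succ_rule]: the
   weighted counts [wcount n g] satisfy wcount (n+1) g = wcount n (succ_rule g).
   An identity between the first three iterates of the rule, checked on the eight
   labels, gives a(n+3) + 3 a(n+1) = 4 a(n+2) + a(n).  The binomial sums satisfy
   the same recurrence by Pascal's rule and agree with a on three initial values;
   the generating function is the recurrence read coefficientwise. *)

Set Implicit Arguments. Unset Strict Implicit. Unset Printing Implicit Defensive.

Fixpoint far_dec (s : seq nat) : bool :=
  if s is x :: r then ~~ has (fun y => x < y) (behead r) && far_dec r else true.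

Fixpoint inv_le1 (s : seq nat) : bool :=
  if s is x :: r then (count (fun y => y < x) r <= 1) && inv_le1 r else true.

Fixpoint below_above (x y : nat) (t : seq nat) : bool :=
  if t is z :: t' then (z < x) && has (fun w => y < w) t' || below_above x y t'
  else false.

(* x :: r contains an occurrence of p whose first letter is x. *)
Fixpoint pattern_at (x : nat) (r : seq nat) : bool :=
  if r is y :: t then (y < x) && below_above x y t || pattern_at x t else false.

Fixpoint avoidsw (s : seq nat) : bool :=
  if s is x :: r then ~~ pattern_at x r && avoidsw r else true.

Definition containsw (t : seq nat) : Prop :=
  exists i j k l, [/\ i < j, j < k, k < l, l < size t &
    [/\ nth 0 t j < nth 0 t i, nth 0 t k < nth 0 t i & nth 0 t j < nth 0 t l]].

Lemma below_aboveP x y t : below_above x y t <->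
  exists k l, [/\ k < l, l < size t, nth 0 t k < x & y < nth 0 t l].
Proof.
elim: t => [|z t IH] /=; first by split=> // -[k [l [_ + _ _]]].
split.
- case/orP => [/andP [zx /(has_nthP 0) [l lt yl]] | /IH [k [l [kl lt kx yl]]]].
  + by exists 0, l.+1.
  + by exists k.+1, l.+1.
- case=> -[|k] [[|l] [kl lt kx yl]] //=.
  + by rewrite kx /=; apply/orP; left; apply/(has_nthP 0); exists l.
  + by apply/orP; right; apply/IH; exists k, l.
Qed.

Lemma pattern_atP x r : pattern_at x r <->
  exists j k l, [/\ j < k, k < l, l < size r &
    [/\ nth 0 r j < x, nth 0 r k < x & nth 0 r j < nth 0 r l]].
Proof.
elim: r => [|y t IH] /=; first by split=> // -[j [k [l [_ _ + _]]]].
split.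
- case/orP => [/andP [yx /below_aboveP [k [l [kl lt kx yl]]]] | /IH [j [k [l H]]]].
  + by exists 0, k.+1, l.+1.
  + by exists j.+1, k.+1, l.+1.
- case=> -[|j] [[|k] [[|l] [jk kl lt [jx kx jl]]]] //=.
  + by rewrite jx /=; apply/orP; left; apply/below_aboveP; exists k, l.
  + by apply/orP; right; apply/IH; exists j, k, l.
Qed.

Lemma avoidswP t : ~~ avoidsw t <-> containsw t.
Proof.
elim: t => [|x r IH] /=; first by split=> // -[i [j [k [l [_ _ _ + _]]]]].
rewrite negb_and negbK; split.
- case/orP => [/pattern_atP [j [k [l [jk kl lt H]]]] | /IH [i [j [k [l [ij jk kl lt H]]]]]].
  + by exists 0, j.+1, k.+1, l.+1.
  + by exists i.+1, j.+1, k.+1, l.+1.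
- case=> -[|i] [[|j] [[|k] [[|l] [ij jk kl lt H]]]] //=.
  + by apply/orP; left; apply/pattern_atP; exists j, k, l.
  + by apply/orP; right; apply/IH; exists i, j, k, l.
Qed.

Lemma below_above_ins x y n w v : y < n -> x <= n ->
  below_above x y (w ++ n :: v) = below_above x y (w ++ v) || has (fun z => z < x) w.
Proof.
move=> yn xn; elim: w => [|z w IH] /=; first by rewrite ltnNge xn orbF.
by rewrite IH has_cat /= yn orbT andbT; case: (z < x); rewrite ?orbT ?orbF.
Qed.

Lemma pattern_at_ins x n u v : x <= n -> all (gtn n) u ->
  pattern_at x (u ++ n :: v) = pattern_at x (u ++ v) || (1 < count (fun z => z < x) u).
Proof.
move=> xn; elim: u => [|y u IH] /=; first by rewrite ltnNge xn orbF.
case/andP=> yn /IH ->; rewrite below_above_ins // has_count.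
case: (y < x) => /=; last by rewrite add0n.
by case: (count _ u) => [|[|c]]; rewrite /= ?orbF ?orbT.
Qed.

(* When every entry is below x the constraint [z < x] is void. *)
Lemma below_above_small x y t : all (gtn x) t ->
  below_above x y t = has (fun w => y < w) (behead t).
Proof.
elim: t => [|z t IH] //= /andP [zx /IH ->]; rewrite zx /=.
by case: t {IH} => [|w t] //=; case: (y < w); rewrite ?orbT ?orbb.
Qed.

Lemma pattern_at_small n v : all (gtn n) v -> pattern_at n v = ~~ far_dec v.
Proof.
elim: v => [|y t IH] //= /andP [yn vn].
by rewrite IH // yn below_above_small // negb_and negbK.
Qed.

Lemma avoidsw_ins n u v : all (gtn n) u -> all (gtn n) v ->
  avoidsw (u ++ n :: v) = [&& avoidsw (u ++ v), inv_le1 u & far_dec v].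
Proof.
move=> un vn; elim: u un => [|x u IH] /=.
  by move=> _; rewrite pattern_at_small // negbK andbC.
case/andP=> xn un; rewrite pattern_at_ins ?(ltnW xn) // IH // negb_or -leqNgt.
by case: (pattern_at _ _); case: (avoidsw _); case: (_ <= 1); case: (inv_le1 u).
Qed.

Definition perms (n : nat) : seq (seq nat) := permutations (iota 0 n).

Definition word n (s : 'S_n) : seq nat := [seq val (s i) | i <- enum 'I_n].

Lemma size_word n (s : 'S_n) : size (word s) = n.
Proof. by rewrite size_map size_enum_ord. Qed.

Lemma nth_word n (s : 'S_n) (i : 'I_n) : nth 0 (word s) i = s i.
Proof. by rewrite (nth_map i) ?size_enum_ord // nth_ord_enum. Qed.

Lemma word_inj n : injective (@word n).
Proof.
move=> s s' eq_ss'; apply/permP => i; apply: val_inj.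
by rewrite /= -!nth_word eq_ss'.
Qed.

Lemma permsP n x : reflect (exists s : 'S_n, x = word s) (x \in perms n).
Proof.
have iotaE : iota 0 n = [tuple val i | i < n] by rewrite /= -val_enum_ord.
rewrite mem_permutations iotaE; apply: (iffP tuple_permP) => -[s ->]; exists s;
  by rewrite /word /=; apply: eq_map => i; rewrite tnth_mktuple.
Qed.

Lemma contains_popE n (s : 'S_n) : contains_pop 4 pop_p s <-> containsw (word s).
Proof.
split.
- case/existsP => f /andP [/forallP incr /forallP rel].
  have f_incr (i j : 'I_4) : i < j -> f i < f j.
    by move: (incr i) => /forallP/(_ j)/implyP.
  have f_rel (i j : 'I_4) : (i.+1, j.+1) \in pop_p -> s (f j) < s (f i).
    by move: (rel i) => /forallP/(_ j)/implyP.
  exists (f (@Ordinal 4 0 isT)), (f (@Ordinal 4 1 isT)), (f (@Ordinal 4 2 isT)),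
         (f (@Ordinal 4 3 isT)).
  rewrite !nth_word size_word ltn_ord.
  by split; try apply: f_incr; split; apply: f_rel.
- case=> i [j [k [l [ij jk kl]]]]; rewrite size_word => ln.
  have [lt_i lt_j lt_k] : [/\ i < n, j < n & k < n] by split; lia.
  rewrite (nth_word s (Ordinal lt_i)) (nth_word s (Ordinal lt_j)).
  rewrite (nth_word s (Ordinal lt_k)) (nth_word s (Ordinal ln)) => -[ji ki jl].
  pose pos := [:: Ordinal lt_i; Ordinal lt_j; Ordinal lt_k; Ordinal ln].
  apply/existsP; exists [ffun x : 'I_4 => nth (Ordinal ln) pos x].
  apply/andP; split; apply/forallP => -[x ltx]; apply/forallP => -[y lty]; rewrite !ffunE.
  + by case: x ltx => [|[|[|[|x]]]] //; case: y lty => [|[|[|[|y]]]] //= _ _; lia.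
  + by case: x ltx => [|[|[|[|x]]]] //; case: y lty => [|[|[|[|y]]]].
Qed.

Lemma a_count n : a n = count avoidsw (perms n).
Proof.
have words_perms : perm_eq [seq word s | s <- enum 'S_n] (perms n).
  apply: uniq_perm; rewrite ?permutations_uniq ?(map_inj_uniq (@word_inj n)) ?enum_uniq //.
  move=> x; apply/mapP/permsP => -[s]; first by exists s.
  by exists s; rewrite ?mem_enum.
rewrite /a /num_avoiders cardE /enum_mem size_filter -(seq.permP words_perms).
rewrite [RHS]count_map enumT; apply: eq_count => s; rewrite /= inE /avoids_pop.
apply/idP/idP; first by apply: contraNT => /avoidswP /contains_popE.
by apply: contraL => /contains_popE /avoidswP.
Qed.

Definition ins (m : nat) (s : seq nat) : seq nat := take m s ++ size s :: drop m s.

Lemma size_ins m s : size (ins m s) = (size s).+1.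
Proof. by rewrite size_cat /= addnS -size_cat cat_take_drop. Qed.

Lemma perm_ins m s : perm_eq (ins m s) (size s :: s).
Proof. by rewrite /ins -cat1s perm_catCA /= perm_cons cat_take_drop. Qed.

Lemma index_rem_cat (x : nat) u v : x \notin u ->
  index x (u ++ x :: v) = size u /\ rem x (u ++ x :: v) = u ++ v.
Proof.
elim: u => [|y u IH] /=; first by rewrite eqxx.
by rewrite in_cons negb_or eq_sym => /andP [/negbTE -> /IH [-> ->]].
Qed.

Lemma ins_inv m s : size s \notin s -> m <= size s ->
  index (size s) (ins m s) = m /\ rem (size s) (ins m s) = s.
Proof.
move=> ns ms; have ns_take : size s \notin take m s by apply: contra ns; apply: mem_take.
by have [-> ->] := index_rem_cat (drop m s) ns_take; rewrite size_takel // cat_take_drop.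
Qed.

Lemma perms_mem n s : s \in perms n -> [/\ size s = n, uniq s & all (gtn n) s].
Proof.
rewrite mem_permutations => ps; rewrite (perm_size ps) (perm_uniq ps) size_iota iota_uniq.
by split=> //; apply/allP => x; rewrite (perm_mem ps) mem_iota.
Qed.

Lemma perms_succE n t : (t \in perms n.+1) = perm_eq t (n :: iota 0 n).
Proof. by rewrite mem_permutations -addn1 iotaD cats1 perm_sym perm_rcons perm_sym. Qed.

Lemma ins_perms n m s : s \in perms n -> ins m s \in perms n.+1.
Proof.
move=> sn; have [size_s _ _] := perms_mem sn.
by rewrite perms_succE (permPl (perm_ins m s)) size_s perm_cons -mem_permutations.
Qed.

Lemma perms_ins n t : t \in perms n.+1 ->
  exists m s, [/\ s \in perms n, m <= n & t = ins m s].
Proof.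
move=> tn; have [size_t uniq_t _] := perms_mem tn.
have n_t : n \in t by move: tn; rewrite perms_succE => /perm_mem ->; apply: mem_head.
case/splitPr: n_t tn size_t uniq_t => u v tn size_t uniq_t.
have size_uv : size (u ++ v) = n by move: size_t; rewrite !size_cat /= addnS => -[].
exists (size u), (u ++ v); split.
- rewrite mem_permutations -(perm_cons n).
  by move: tn; rewrite perms_succE -cat1s perm_catCA.
- by rewrite -size_uv size_cat leq_addr.
- by rewrite /ins size_uv take_size_cat // drop_size_cat.
Qed.

Lemma gtn_notin n s : all (gtn n) s -> n \notin s.
Proof. by move=> /allP sn; apply/negP => /sn; rewrite /= ltnn. Qed.

Lemma perms_succ n :
  perm_eq (perms n.+1) [seq ins m s | s <- perms n, m <- iota 0 n.+1].
Proof.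
apply: uniq_perm; rewrite ?permutations_uniq //.
  apply: allpairs_uniq; rewrite ?permutations_uniq ?iota_uniq //.
  have ins_inj s m : s \in perms n -> m \in iota 0 n.+1 ->
      index n (ins m s) = m /\ rem n (ins m s) = s.
    case/perms_mem => <- _ all_s; rewrite mem_iota ltnS => /andP [_ ms].
    exact: ins_inv (gtn_notin all_s) ms.
  move=> _ _ /allpairsP [[s m] [sn mn ->]] /allpairsP [[s' m'] [sn' mn' ->]] /= eq_ins.
  have [i r] := ins_inj s m sn mn; have [i' r'] := ins_inj s' m' sn' mn'.
  by congr (_, _); [rewrite -r -r' | rewrite -i -i']; rewrite eq_ins.
move=> t; apply/idP/allpairsP => [/perms_ins [m [s [sn mn ->]]] | [[s m] [sn _ ->]]].
  by exists (s, m); rewrite mem_iota.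
exact: ins_perms.
Qed.

Lemma sum_perms_succ n (F : seq nat -> nat) :
  \sum_(t <- perms n.+1) F t = \sum_(s <- perms n) \sum_(m <- iota 0 n.+1) F (ins m s).
Proof. by rewrite (perm_big _ (perms_succ n)) big_allpairs_dep. Qed.

(* Position j of s can receive a new maximum, in the sense of [avoidsw_ins]. *)
Definition admissible (s : seq nat) (j : nat) : bool :=
  inv_le1 (take j s) && far_dec (drop j s).

Lemma all_gtn_take n j s : all (gtn n) s -> all (gtn n) (take j s).
Proof. by move=> /allP sn; apply/allP => x /mem_take /sn. Qed.

Lemma all_gtn_drop n j s : all (gtn n) s -> all (gtn n) (drop j s).
Proof. by move=> /allP sn; apply/allP => x /mem_drop /sn. Qed.

Lemma avoidsw_ins_max m s : all (gtn (size s)) s ->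
  avoidsw (ins m s) = avoidsw s && admissible s m.
Proof.
by move=> sn; rewrite avoidsw_ins ?all_gtn_take ?all_gtn_drop // cat_take_drop andbA.
Qed.

Lemma inv_le1_take j s : inv_le1 s -> inv_le1 (take j s).
Proof.
elim: s j => [|x s IH] [|j] //= /andP [cnt_x inv_s]; rewrite IH // andbT.
by apply: leq_trans cnt_x; rewrite -[X in _ <= count _ X](cat_take_drop j) count_cat leq_addr.
Qed.

Lemma far_dec_drop j s : far_dec s -> far_dec (drop j s).
Proof. by elim: s j => [|x s IH] [|j] //= /andP [_ /IH]. Qed.

Lemma inv_le1_ins n u v : all (gtn n) u ->
  inv_le1 (u ++ n :: v) = inv_le1 (u ++ v) && (count (fun y => y < n) v <= 1).
Proof.
elim: u => [|x u IH] /=; first by rewrite andbC.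
case/andP=> xn /IH ->; rewrite !count_cat /= ltnNge (ltnW xn) add0n.
by rewrite andbA.
Qed.

Lemma far_dec_max n v : all (gtn n) v -> far_dec (n :: v) = far_dec v.
Proof.
move=> vn /=; suff /negbTE -> : ~~ has (fun y => n < y) (behead v) by [].
by apply/hasPn => y /mem_behead /(allP vn) /= yn; rewrite -leqNgt ltnW.
Qed.

Definition rl_max (s : seq nat) (i : nat) : bool :=
  ~~ has (fun y => nth 0 s i < y) (drop i.+1 s).

Definition label : Type := (bool * bool * bool)%type.

(* The first bit says whether position m-1
   of t is admissible, the second whether position m+2 is, and the third whether
   moreover the entry after the maximum of t is a right-to-left maximum (which
   fixes the first bit of the child at m+2). *)
Definition label_of (m : nat) (s : seq nat) : label :=
  ((0 < m) && rl_max s m.-1,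
   (m < size s) && inv_le1 (take m.+1 s),
   [&& m < size s, inv_le1 (take m.+1 s) & rl_max s m]).

Definition succ_rule (g : label -> nat) (l : label) : nat :=
  let: (x, y, z) := l in
  (if x then g (false, true, false) else 0) + g (false, true, true) + g (true, y, z)
  + (if y then g (z, false, false) else 0).

(* Throughout, t = ins m s is an avoider: s is a word below [size s] and m is
   admissible for s. *)
Section MaxInsertion.

Variables (m : nat) (s : seq nat).
Hypotheses (s_lt : all (gtn (size s)) s) (m_le : m <= size s).
Hypotheses (inv_m : inv_le1 (take m s)) (far_m : far_dec (drop m s)).

Lemma inv_le1_take_ins j : j <= (size s).+1 ->
  inv_le1 (take j (ins m s)) = (j <= m.+1) || (j == m.+2) && inv_le1 (take m.+1 s).
Proof.
case: (leqP j m) => [jm _ | mj].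
  by rewrite /ins takel_cat ?size_takel // inv_le1_take // (leq_trans jm).
have [k ->] : exists k, j = m + k.+1 by exists (j - m.+1); lia.
move=> jn; rewrite /ins take_cat size_takel // ltnNge leq_addr /= addKn /=.
rewrite inv_le1_ins ?all_gtn_take // -takeD.
have := all_gtn_take k (all_gtn_drop m s_lt); rewrite all_count => /eqP ->.
rewrite size_takel; last by rewrite size_drop; lia.
case: k {mj jn} => [|[|k]]; rewrite ?addn0 ?addn1 ?addn2 ?inv_m.
- by rewrite leqnn.
- by rewrite ltnn eqxx andbT.
- by rewrite andbF; case: (inv_le1 _); lia.
Qed.

Lemma far_dec_drop_ins j :
  far_dec (drop j (ins m s)) = (m <= j) || (j.+1 == m) && rl_max s j.
Proof.
case: (leqP m j) => [mj | jm].
  have [k ->] : exists k, j = m + k by exists (j - m); lia.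
  rewrite /ins drop_cat size_takel // ltnNge leq_addr /= addKn.
  by case: k => [|k]; rewrite ?drop0 ?far_dec_max ?all_gtn_drop //= far_dec_drop.
have m_s : j < size s by lia.
rewrite /ins drop_cat size_takel // jm /= (drop_nth 0) ?size_takel //.
rewrite nth_take //=; move: jm far_m; rewrite leq_eqVlt => /orP [/eqP <- | jm1] far_suffix.
  rewrite eqxx drop_oversize ?size_takel // cat0s far_dec_max ?all_gtn_drop //.
  by rewrite far_suffix andbT.
rewrite (drop_nth 0) ?size_takel // (ltn_eqF jm1) /=.
apply/negbTE; rewrite negb_and negbK; apply/orP; left; apply/hasP.
exists (size s); first by rewrite mem_cat mem_head orbT.
exact: (allP s_lt) _ (mem_nth 0 m_s).
Qed.

Lemma rl_max_ins_lt i : i < m -> rl_max (ins m s) i = false.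
Proof.
move=> im; have i_s : i < size s by lia.
apply/negbF/hasP; exists (size s).
  rewrite /ins drop_cat size_takel //; case: ifP => _; first by rewrite mem_cat mem_head orbT.
  by rewrite (_ : i.+1 - m = 0) ?mem_head //; lia.
by rewrite /ins nth_cat size_takel // im nth_take //; apply: (allP s_lt); rewrite mem_nth.
Qed.

Lemma rl_max_ins_max : rl_max (ins m s) m.
Proof.
rewrite /rl_max /ins nth_cat drop_cat size_takel // ltnn ltnNge leqnSn /= subnn subSnn /=.
by rewrite drop0; apply/hasPn => y yv; rewrite -leqNgt ltnW //; apply: (allP (all_gtn_drop m s_lt)).
Qed.

Lemma rl_max_ins_next : rl_max (ins m s) m.+1 = rl_max s m.
Proof.
rewrite /rl_max /ins nth_cat drop_cat size_takel // ltnNge leqnSn /= ltnNge.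
rewrite (leqW (leqnSn m)) subSnn (_ : m.+2 - m = 2) /=; last by lia.
by rewrite nth_drop addn0 drop_drop.
Qed.

Lemma admissible_ins j : j <= (size s).+1 ->
  admissible (ins m s) j = [|| (j.+1 == m) && rl_max s j, j == m, j == m.+1
                             | (j == m.+2) && inv_le1 (take m.+1 s)].
Proof.
move=> jn; rewrite /admissible inv_le1_take_ins // far_dec_drop_ins.
by case: (rl_max s j); case: (inv_le1 _); lia.
Qed.

Lemma admissible_positions :
  [seq j <- iota 0 (size s).+2 | admissible (ins m s) j] =
  nseq (label_of m s).1.1 m.-1 ++ [:: m; m.+1] ++ nseq (label_of m s).1.2 m.+2.
Proof.
apply: (irr_sorted_eq ltn_trans ltnn); rewrite /label_of.
- by apply: sorted_filter; [exact: ltn_trans | exact: iota_ltn_sorted].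
- have := ltn_predL m; case: (0 < m) => pm; case: (rl_max s _);
    by case: (m < size s); case: (inv_le1 _); rewrite /= ?pm ?ltnSn.
move=> j; rewrite mem_filter mem_iota !mem_cat !mem_nseq !lt0b !inE /=.
have [jn | jn] := ltnP j (size s).+2; last by case: (rl_max s _); case: (inv_le1 _); lia.
rewrite admissible_ins //; have [<- | jm] := eqVneq j.+1 m.
  by case: (rl_max s j); case: (inv_le1 _); lia.
by case: (rl_max s j); case: (rl_max s m.-1); case: (inv_le1 _); lia.
Qed.

Lemma label_before : 0 < m -> label_of m.-1 (ins m s) = (false, true, false).
Proof.
move=> m_pos; rewrite /label_of size_ins prednK // inv_le1_take_ins ?(leqW m_le) //.
by rewrite !rl_max_ins_lt ?andbF ?leqnSn //; lia.
Qed.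

Lemma label_at : label_of m (ins m s) = (false, true, true).
Proof.
rewrite /label_of size_ins inv_le1_take_ins ?rl_max_ins_max ?leqnSn ?ltnS //.
have [-> // | m_pos] := posnP m.
by rewrite rl_max_ins_lt ?m_le ?leqnn //; lia.
Qed.

Lemma label_after :
  label_of m.+1 (ins m s) = (true, (label_of m s).1.2, (label_of m s).2).
Proof.
rewrite /label_of size_ins rl_max_ins_max rl_max_ins_next /= ltnS.
by case: (ltnP m (size s)) => ms; rewrite /= ?inv_le1_take_ins ?ltnn ?eqxx.
Qed.

Lemma label_after2 : m < size s -> label_of m.+2 (ins m s) = (rl_max s m, false, false).
Proof.
move=> ms; rewrite /label_of size_ins rl_max_ins_next /= ltnS.
have [m1s | //] := ltnP m.+1 (size s); rewrite inv_le1_take_ins //.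
by have -> : (m.+3 <= m.+1) || (m.+3 == m.+2) && inv_le1 (take m.+1 s) = false by lia.
Qed.

Lemma succession (g : label -> nat) :
  \sum_(j <- iota 0 (size s).+2 | admissible (ins m s) j) g (label_of j (ins m s)) =
  succ_rule g (label_of m s).
Proof.
rewrite -big_filter admissible_positions !big_cat !big_cons big_nil label_at label_after.
case lE: (label_of m s) => [[x y] z] /=; rewrite /label_of in lE; case: lE => xE yE zE.
case: x xE => [/andP [m_pos _] | _]; case: y yE zE => [/andP [ms inv1] | _] zE;
  rewrite ?big_cons big_nil ?label_before ?label_after2 // -?zE ?ms ?inv1 /=; lia.
Qed.

End MaxInsertion.

Definition wcount (n : nat) (g : label -> nat) : nat :=
  \sum_(s <- perms n) \sum_(m <- iota 0 n.+1 | avoidsw (ins m s)) g (label_of m s).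

Lemma a_wcount n : a n.+1 = wcount n (fun _ => 1).
Proof.
rewrite a_count -sum1_count big_mkcond sum_perms_succ.
by apply: eq_bigr => s _; rewrite [RHS]big_mkcond.
Qed.

Lemma wcount_succ n g : wcount n.+1 g = wcount n (succ_rule g).
Proof.
rewrite /wcount sum_perms_succ; apply: eq_big_seq => s sn; rewrite [RHS]big_mkcond.
have [size_s _ s_lt] := perms_mem sn; subst n.
apply: eq_big_seq => m; rewrite mem_iota ltnS => /andP [_ m_le].
have ins_lt : all (gtn (size (ins m s))) (ins m s).
  by rewrite size_ins; case/perms_mem: (ins_perms m sn).
rewrite (eq_bigl _ _ (fun j => avoidsw_ins_max j ins_lt)).
have [av_ins | _] := boolP (avoidsw (ins m s)); last by rewrite big_pred0.
move: (av_ins); rewrite avoidsw_ins_max // => /andP [_ /andP [inv_m far_m]].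
by rewrite -(succession s_lt m_le inv_m far_m).
Qed.

Lemma wcount_iter n k g : wcount (n + k) g = wcount n (iter k succ_rule g).
Proof. by elim: k g => [|k IH] g; rewrite ?addn0 // addnS wcount_succ IH iterSr. Qed.

Lemma wcount_lin n f h k : wcount n (fun l => f l + k * h l) = wcount n f + k * wcount n h.
Proof.
rewrite /wcount big_distrr -big_split; apply: eq_bigr => s _ /=.
by rewrite big_distrr -big_split.
Qed.

Lemma eq_wcount n f h : f =1 h -> wcount n f = wcount n h.
Proof. by move=> fh; apply: eq_bigr => s _; apply: eq_bigr => m _. Qed.

Lemma succ_rule_identity (l : label) :
  iter 3 succ_rule (fun _ => 1) l + 3 * iter 1 succ_rule (fun _ => 1) l =
  1 + 4 * iter 2 succ_rule (fun _ => 1) l.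
Proof. by case: l => [[[] []] []]. Qed.

Lemma a_base : [/\ a 0 = 1, a 1 = 1, a 2 = 2 & a 3 = 6].
Proof. by split; rewrite a_count. Qed.

Lemma a_rec n : a n.+3 + 3 * a n.+1 = 4 * a n.+2 + a n.
Proof.
case: n => [|n]; first by case: a_base => -> -> -> ->.
rewrite !a_wcount -[n.+3]addn3 -[n.+2]addn2 -[n.+1]addn1 !wcount_iter [RHS]addnC.
by rewrite -!wcount_lin; apply: eq_wcount => l; apply: succ_rule_identity.
Qed.

(* binsum m = a(m+1) in the binomial form of the theorem. *)
Definition binsum (m : nat) : nat := \sum_(i < m.+1) 'C(m + 2 * i, 3 * i).

(* Terms with i > m vanish, so the range of summation can be enlarged. *)
Lemma binsum_widen m K : m < K -> \sum_(i < K) 'C(m + 2 * i, 3 * i) = binsum m.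
Proof.
move=> mK; rewrite /binsum [RHS](big_ord_widen K (fun i => 'C(m + 2 * i, 3 * i)) mK).
rewrite [RHS]big_mkcond; apply: eq_bigr => i _; case: ltnP => // mi.
by rewrite bin_small //; lia.
Qed.

Lemma binsum_shift m K : m <= K ->
  binsum m = 1 + \sum_(i < K) 'C((m + 2 * i).+2, (3 * i).+3).
Proof.
move=> mK; rewrite -(binsum_widen (K := K.+1)) // big_ord_recl muln0 addn0 bin0.
by congr (1 + _); apply: eq_bigr => i _; congr 'C(_, _); rewrite /= /bump /=; lia.
Qed.

Lemma binom_step M k :
  'C(M.+3, k.+3) + 3 * 'C(M.+1, k.+3) = 3 * 'C(M.+2, k.+3) + 'C(M, k.+3) + 'C(M, k).
Proof. rewrite !binS; lia. Qed.

Lemma binsum_rec m : binsum m.+3 + 3 * binsum m.+1 = 4 * binsum m.+2 + binsum m.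
Proof.
pose T x (i : 'I_m.+3) := 'C((x + 2 * i).+2, (3 * i).+3).
have step : \sum_i T m.+3 i + 3 * \sum_i T m.+1 i =
            3 * \sum_i T m.+2 i + \sum_i T m i + binsum m.+2.
  rewrite /binsum !big_distrr -!big_split; apply: eq_bigr => i _ /=.
  by rewrite /T !addSn binom_step.
have shift x : x <= m.+3 -> binsum x = 1 + \sum_i T x i by exact: binsum_shift.
have shift2 := shift m.+2 (leqnSn _); rewrite !shift //; lia.
Qed.

Lemma rec3_unique (u v : nat -> nat) :
  (forall n, u n.+3 + 3 * u n.+1 = 4 * u n.+2 + u n) ->
  (forall n, v n.+3 + 3 * v n.+1 = 4 * v n.+2 + v n) ->
  u 0 = v 0 -> u 1 = v 1 -> u 2 = v 2 -> u =1 v.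
Proof.
move=> ru rv e0 e1 e2; elim/ltn_ind => -[|[|[|n]]] // IH.
have [e0' e1' e2'] : [/\ u n = v n, u n.+1 = v n.+1 & u n.+2 = v n.+2].
  by split; apply: IH; lia.
by move: (ru n) (rv n); lia.
Qed.

Lemma binsum_base : [/\ binsum 0 = 1, binsum 1 = 2 & binsum 2 = 6].
Proof. by split; rewrite /binsum !big_ord_recr big_ord0. Qed.

Lemma a_binsum m : a m.+1 = binsum m.
Proof.
have [[_ a1 a2 a3] [b0 b1 b2]] := (a_base, binsum_base).
apply: (rec3_unique (u := fun m => a m.+1)) => [k | k | | |]; rewrite ?a1 ?a2 ?a3 ?b0 ?b1 ?b2 //.
  exact: a_rec.
exact: binsum_rec.
Qed.

Local Open Scope ring_scope.

Theorem theorem3p12 :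
  [/\ [/\ a 0 = 1%N, a 1 = 1%N & a 2 = 2%N],
   (forall n : nat, (3 <= n)%N ->
      (a n)%:Z = (4 * (a (n - 1)%N)%:Z - 3 * (a (n - 2)%N)%:Z + (a (n - 3)%N)%:Z)%R),
   (forall n : nat, (1 <= n)%N ->
      (a n = \sum_(i < n) 'C(n + 2 * i - 1, 3 * i))%N) &
   (* generating function identity, read coefficientwise:
      (1 - 4x + 3x^2 - x^3) * sum_n a(n) x^n = 1 - 3x + x^2 *)
   (forall n : nat,
      ((a n)%:Z - (if (1 <= n)%N then 4 * (a (n - 1)%N)%:Z else 0)
                + (if (2 <= n)%N then 3 * (a (n - 2)%N)%:Z else 0)
                - (if (3 <= n)%N then (a (n - 3)%N)%:Z else 0))%R
      = (if n == 0%N then 1 else if n == 1%N then -3 else if n == 2%N then 1 else 0)%R)].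
Proof.
have [a0 a1 a2 _] := a_base.
have rec n : (3 <= n)%N ->
    (a n)%:Z = 4 * (a (n - 1)%N)%:Z - 3 * (a (n - 2)%N)%:Z + (a (n - 3)%N)%:Z.
  by case: n => [|[|[|n]]] // _; rewrite !subSS !subn0; have := a_rec n; lia.
split => // [[|m] // _ | ].
  rewrite a_binsum; apply: eq_bigr => i _; congr 'C(_, _); lia.
by case=> [|[|[|n]]]; rewrite ?a0 ?a1 ?a2 //= rec //; lia.
Qed.
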